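(* Let $T$ be a reduced linear trellis of length $n$ with span distribution $\mathcal{S}(T)$, and for each $\mathfrak{s}\in\mathcal{S}(T)$ let $m(\mathfrak{s},T)$ be its multiplicity. Let $\boldsymbol{\alpha}^{\mathfrak{s},i}\in\mathbb{F}^n$ ($\mathfrak{s}\in\mathcal{S}(T)$, $1\le i\le m(\mathfrak{s},T)$) be vectors each having span $\mathfrak{s}$. Then $$T\sim\bigotimes_{\mathfrak{s}\in\mathcal{S}(T)}\bigotimes_{i=1}^{m(\mathfrak{s},T)}\boldsymbol{\alpha}^{\mathfrak{s},i}|\mathfrak{s}$$ if and only if for every $\mathfrak{s}\in\mathcal{S}(T)$ $$C_{\mathfrak{s}}(T)=\langle\boldsymbol{\alpha}^{\mathfrak{s},1},\dots,\boldsymbol{\alpha}^{\mathfrak{s},m(\mathfrak{s},T)}\rangle+\sum_{\mathfrak{s}'<\mathfrak{s}}C_{\mathfrak{s}'}(T).$$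
   Context: Let $\mathbb{F}$ be a finite field and $n\ge1$; indices are taken in $\mathbb{Z}_n$. A trellis $T$ of length $n$ over $\mathbb{F}$ consists of pairwise disjoint finite vertex sets $V_i(T)$, $i\in\mathbb{Z}_n$, and edge sets $E_i(T)\subseteq V_i(T)\times\mathbb{F}\times V_{i+1}(T)$; $(v,\alpha,w)\in E_i(T)$ is an edge from $v$ to $w$ with label $\alpha$. Trellises are trim. $T$ is linear if each $V_i(T)$ is an $\mathbb{F}$-vector space and each $E_i(T)$ a subspace. A cycle is a closed path of length $n$ starting in $V_0(T)$, identified with $(\mathbf{v},\boldsymbol{\alpha})\in\prod_iV_i(T)\times\mathbb{F}^n$; $\mathbb{S}(T)$ is the space of cycles, $L(\mathbf{v},\boldsymbol{\alpha})=\boldsymbol{\alpha}$. $T$ is reduced if every edge lies on a cycle. $T\sim T'$ means there are bijections $f_i:V_i(T)\to V_i(T')$ with $(v,\alpha,w)\in E_i(T)\iff(f_i(v),\alpha,f_{i+1}(w))\in E_i(T')$. Spans: for $a\in\mathbb{Z}_n$, $0\le l\le n-1$, $[a,a+l]=\{a,\dots,a+l\}\subseteq\mathbb{Z}_n$, $(a,a+l]=[a,a+l]\setminus\{a\}$; $(a,l)$ is a span; degenerate spans are $\emptyset$ (length $-1$) and $\mathbb{Z}_n$ (length $n$, written $(a,n)$). Partial order: $(a_1,l_1)\le(a_2,l_2)$ iff ($l_1\le l_2<n-1$ and $[a_1,a_1+l_1]\subseteq[a_2,a_2+l_2]$) or ($l_2=n-1$ and $(a_1,a_1+l_1]\subseteq(a_2,a_2+l_2]$)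 or $l_1=-1$ or $l_2=n$; $\mathfrak{s}'<\mathfrak{s}$ means $\mathfrak{s}'\le\mathfrak{s}$, $\mathfrak{s}'\ne\mathfrak{s}$. A vector in $\mathbb{F}^n$ has span $(a,l)$, $0\le l\le n-1$, if its support lies in $[a,a+l]$; $\mathbb{Z}_n$ is a span of every vector. A nondegenerate $(a,l)$ is a span of a cycle $(\mathbf{v},\boldsymbol{\alpha})$ if $\{i:v_i\ne0\}\subseteq(a,a+l]$ and $\{i:\alpha_i\ne0\}\subseteq[a,a+l]$; $\emptyset$ is a span only of the zero cycle and $\mathbb{Z}_n$ of every cycle. $\mathbb{S}_{\mathfrak{s}}(T)$ is the subspace of cycles with span $\mathfrak{s}$ and $C_{\mathfrak{s}}(T):=L(\mathbb{S}_{\mathfrak{s}}(T))$. Elementary trellis $\boldsymbol{\alpha}|(a,l)$ ($\boldsymbol{\alpha}$ of span $(a,l)$, $0\le l\le n$): $V_i=\mathbb{F}$ for $i\in(a,a+l]$ (all $i$ if $l=n$), $V_i=0$ otherwise, $E_i=\langle(u_i,\alpha_i,u_{i+1})\rangle$ with $u_i=1$ if $i\in(a,a+l]$, else $0$. The product $T\otimes T'$ has $V_i=V_i(T)\times V_i(T')$ and $E_i=\{((v,v'),\alpha+\alpha',(w,w')):(v,\alpha,w)\in E_i(T),(v',\alpha',w')\in E_i(T')\}$. An elementary trellis factorization of $T$ is an expression $T\sim\bigotimes_{i=1}^r\boldsymbol{\alpha}^i|(a_i,l_i)$ with at most one factor of span $(a,0)$ for each $a$. Every reduced linear trellis has one,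 and all have the same multiset of spans, the span distribution $\mathcal{S}(T)$. *)

From HB Require Import structures.
From mathcomp Require Import all_boot all_order all_algebra all_fingroup all_field.
Unset Printing Implicit Defensive.
Import GRing.Theory.
Local Open Scope ring_scope.

Section Trellis.
Variables (F : finFieldType) (n : nat).

Definition nxt (i : 'I_n) : 'I_n := ordS i.

(* A trellis: vertex set V_i is the F-vector space 'rV_(tdim i) (any finite
   F-vector space is isomorphic to one of these, and ~ only sees bijections);
   E_i is a set of triples (v, alpha, w). *)
Record trellis := Trellis {
  tdim : 'I_n -> nat;
  tedges : forall i : 'I_n, {set ('rV[F]_(tdim i) * F * 'rV[F]_(tdim (nxt i)))}
}.

Definition is_linear (T : trellis) : Prop :=
  forall i, ((0 : 'rV_(tdim T i)), (0 : F), (0 : 'rV_(tdim T (nxt i)))) \in tedges T i /\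
    forall (c : F) e e', e \in tedges T i -> e' \in tedges T i ->
      (c *: e.1.1 + e'.1.1, c * e.1.2 + e'.1.2, c *: e.2 + e'.2) \in tedges T i.

Definition is_trim (T : trellis) : Prop :=
  (forall i (v : 'rV_(tdim T i)), exists a w, (v, a, w) \in tedges T i) /\
  (forall i (w : 'rV_(tdim T (nxt i))), exists v a, (v, a, w) \in tedges T i).

Definition is_cycle (T : trellis) (v : forall i, 'rV[F]_(tdim T i)) (al : 'rV[F]_n) : bool :=
  [forall i, (v i, al 0 i, v (nxt i)) \in tedges T i].

Definition is_reduced (T : trellis) : Prop :=
  forall i e, e \in tedges T i ->
    exists (v : forall j, 'rV[F]_(tdim T j)) (al : 'rV[F]_n),
      is_cycle T v al /\ v i = e.1.1 /\ al 0 i = e.1.2 /\ v (nxt i) = e.2.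

Definition trellis_equiv (T T' : trellis) : Prop :=
  exists f : forall i, 'rV[F]_(tdim T i) -> 'rV[F]_(tdim T' i),
    (forall i, bijective (f i)) /\
    forall i v a w, ((v, a, w) \in tedges T i) = ((f i v, a, f (nxt i) w) \in tedges T' i).

(* spans: inl (a, l) is the nondegenerate span (a,l), 0 <= l <= n-1;
   inr false is the empty span, inr true is Z_n. *)
Definition tspan := (('I_n * 'I_n) + bool)%type.
Definition sEmpty : tspan := inr false.
Definition sFull : tspan := inr true.

(* [a, a+l] and (a, a+l] in Z_n *)
Definition cc (a l : 'I_n) (i : 'I_n) : bool := ((i + n - a) %% n <= l)%N.
Definition oc (a l : 'I_n) (i : 'I_n) : bool := (0 < (i + n - a) %% n <= l)%N.

Definition span_le (s1 s2 : tspan) : bool :=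
  match s1, s2 with
  | inr false, _ => true
  | _, inr true => true
  | inl (a1, l1), inl (a2, l2) =>
      ((l1 <= l2)%N && (l2 < n.-1)%N && [forall i, cc a1 l1 i ==> cc a2 l2 i])
      || ((val l2 == n.-1) && [forall i, oc a1 l1 i ==> oc a2 l2 i])
  | _, _ => false
  end.
Definition span_lt (s1 s2 : tspan) : bool := (s1 != s2) && span_le s1 s2.

Definition vec_has_span (al : 'rV[F]_n) (s : tspan) : bool :=
  match s with
  | inl (a, l) => [forall i, (al 0 i != 0) ==> cc a l i]
  | inr false => al == 0
  | inr true => true
  end.

Definition cycle_has_span (T : trellis) (v : forall i, 'rV[F]_(tdim T i))
    (al : 'rV[F]_n) (s : tspan) : bool :=
  match s with
  | inl (a, l) => [forall i, (v i != 0) ==> oc a l i] && [forall i, (al 0 i != 0) ==> cc a l i]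
  | inr false => [forall i, v i == 0] && (al == 0)
  | inr true => true
  end.

(* C_s(T) = L(S_s(T)); T linear so S_s(T) is a subspace and the span of the
   set of labels equals the set of labels itself. *)
Definition Cspan (T : trellis) (s : tspan) : {vspace 'rV[F]_n} :=
  <<enum [set al : 'rV[F]_n | [exists v : {dffun forall i, 'rV[F]_(tdim T i)},
                                  is_cycle T v al && cycle_has_span T v al s]]>>%VS.

Definition elem_in (s : tspan) (i : 'I_n) : bool :=
  match s with inl (a, l) => oc a l i | inr b => b end.

Definition elem_trellis (al : 'rV[F]_n) (s : tspan) : trellis :=
  @Trellis (fun i => nat_of_bool (elem_in s i))
    (fun i => [set (c *: const_mx 1, c * al 0 i, c *: const_mx 1) | c : F]).

(* product of trellises; V_i(T) x V_i(T') is realised as 'rV_(d + d') via row_mx *)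
Definition tensor (T T' : trellis) : trellis :=
  @Trellis (fun i => (tdim T i + tdim T' i)%N)
    (fun i => [set (row_mx e.1.1 e'.1.1, e.1.2 + e'.1.2, row_mx e.2 e'.2)
              | e in tedges T i, e' in tedges T' i]).

Definition unit_trellis : trellis :=
  @Trellis (fun _ => 0%N) (fun i => [set (0, 0, 0)]).

Definition tensor_list (fac : seq (tspan * 'rV[F]_n)) : trellis :=
  foldr (fun p T => tensor (elem_trellis p.2 p.1) T) unit_trellis fac.

Definition is_elem_factorization (T : trellis) (fac : seq (tspan * 'rV[F]_n)) : Prop :=
  (forall p, p \in fac -> p.1 != sEmpty /\ vec_has_span p.2 p.1) /\
  (forall a : 'I_n,
     (count (fun s : tspan => if s is inl (a', l) then (a' == a) && (val l == 0)%N else false)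
            (map fst fac) <= 1)%N) /\
  trellis_equiv T (tensor_list fac).

(* M (a multiset of spans, as a seq up to permutation) is the tspan
   distribution S(T) *)
Definition span_distribution (T : trellis) (M : seq tspan) : Prop :=
  exists fac, is_elem_factorization T fac /\ perm_eq (map fst fac) M.

End Trellis.

Arguments nxt {n}.
Arguments tdim {F n}.
Arguments tedges {F n}.
Arguments is_linear {F n}.
Arguments is_trim {F n}.
Arguments is_cycle {F n}.
Arguments is_reduced {F n}.
Arguments trellis_equiv {F n}.
Arguments sEmpty {n}.
Arguments sFull {n}.
Arguments cc {n}.
Arguments oc {n}.
Arguments span_le {n}.
Arguments span_lt {n}.
Arguments vec_has_span {F n}.
Arguments cycle_has_span {F n}.
Arguments Cspan {F n}.
Arguments elem_in {n}.
Arguments elem_trellis {F n}.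
Arguments tensor {F n}.
Arguments unit_trellis {F n}.
Arguments tensor_list {F n}.
Arguments is_elem_factorization {F n}.
Arguments span_distribution {F n}.

(* Coordinates on a product of elementary trellises are coefficient sequences: a
   cycle of a product with factors alpha^t | s_t is sum_t g_t alpha^t, and its vertex at
   time i records g_t for the factors active at i.  Hence C_s of the product is spanned
   by the alpha^t with s_t <= s.  As C_s is invariant under equivalence of linear
   trellises, splitting s_t <= s into s_t = s and s_t < s gives the forward implication.
   Conversely, fix a factorization T ~ prod_u beta^u | s_u.  The hypothesis says that,
   for each span s, the alpha^t of span s span C_s modulo C_{<s}, and there are as
   many of them as beta^u of span s.  A basis-exchange argument, class by class, yields
   an invertible matrix Phi with alpha^t = sum_u Phi_tu beta^u, where Phi_tu <> 0 only
   if s_u <= s_t, and which is triangular along the span order.  The coefficient change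
   g |-> g Phi then maps vertices of prod alpha^t | s_t bijectively onto those of
   prod beta^u | s_u, preserving edges. *)

From HB Require Import structures.
From mathcomp Require Import all_boot all_order all_algebra all_fingroup all_field.
From mathcomp Require Import zify.
Set Implicit Arguments. Unset Strict Implicit. Unset Printing Implicit Defensive.
Import GRing.Theory.
Local Open Scope ring_scope.

Lemma modn_lt_double (n x : nat) : (x < n + n)%N -> (x %% n = if x < n then x else x - n)%N.
Proof.
case: ifP => h; first by rewrite modn_small.
move=> h2; rewrite -{1}(subnK (n:=x) (m:=n)); last by lia.
by rewrite modnDr modn_small //; lia.
Qed.

Section CyclicOffset.
Variables (n : nat) (n_gt0 : (0 < n)%N).

Definition offset (a i : 'I_n) : nat := ((i + (n - a)) %% n)%N.
Definition shift (a : 'I_n) (d : nat) : 'I_n := Ordinal (ltn_pmod (a + d) n_gt0).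

Lemma offsetE (a i : 'I_n) : ((i + n - a) %% n)%N = offset a i.
Proof. by rewrite /offset addnBA // ltnW. Qed.

Lemma offset_lt (a i : 'I_n) : (offset a i < n)%N.
Proof. exact: ltn_pmod. Qed.

Lemma offset_shift (a : 'I_n) d : (d < n)%N -> offset a (shift a d) = d.
Proof.
move=> dn; rewrite /offset /= modnDml.
have ->: (a + d + (n - a) = d + n)%N by have := ltn_ord a; lia.
by rewrite modnDr modn_small.
Qed.

Lemma shift_offset (a i : 'I_n) : shift a (offset a i) = i.
Proof.
apply: val_inj; rewrite /= /offset modnDmr.
have ->: (a + (i + (n - a)) = i + n)%N by have := ltn_ord a; lia.
by rewrite modnDr modn_small.
Qed.

Lemma nxt_shift (a : 'I_n) d : nxt (shift a d) = shift a d.+1.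
Proof. by apply: val_inj; rewrite /= -addn1 modnDml addn1 addnS. Qed.

Lemma offset_shift_mod (a b : 'I_n) d : offset a (shift b d) = ((offset a b + d) %% n)%N.
Proof. by rewrite /offset /= modnDml modnDml; congr (_ %% _)%N; lia. Qed.

Lemma offset_self (a : 'I_n) : offset a a = 0%N.
Proof. by rewrite /offset subnKC ?modnn // ltnW. Qed.

Lemma shift0 (a : 'I_n) : shift a 0 = a.
Proof. by apply: val_inj; rewrite /= addn0 modn_small. Qed.

Lemma offset_eq0 (a i : 'I_n) : (offset a i == 0%N) = (i == a).
Proof.
apply/eqP/eqP => [h|->]; last exact: offset_self.
by rewrite -(shift_offset a i) h shift0.
Qed.
End CyclicOffset.

Section SpanOrder.
Variables (n : nat) (n_gt0 : (0 < n)%N).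

Lemma ccE (a l i : 'I_n) : cc a l i = (offset a i <= l)%N.
Proof. by rewrite /cc offsetE. Qed.

Lemma ocE (a l i : 'I_n) : oc a l i = (0 < offset a i <= l)%N.
Proof. by rewrite /oc offsetE. Qed.

Definition incl (P Q : pred 'I_n) := [forall i, P i ==> Q i].

Lemma incl_refl (P : pred 'I_n) : incl P P.
Proof. by apply/forallP=> i; apply/implyP. Qed.

Lemma incl_trans (P Q R : pred 'I_n) : incl P Q -> incl Q R -> incl P R.
Proof.
move=> /forallP h1 /forallP h2; apply/forallP=> i; apply/implyP=> hp.
exact: (implyP (h2 i) (implyP (h1 i) hp)).
Qed.

Lemma oc_incl_of_cc_incl (a1 l1 a2 l2 : 'I_n) : (l2 < n.-1)%N ->
  incl (cc a1 l1) (cc a2 l2) -> incl (oc a1 l1) (oc a2 l2).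
Proof.
move=> l2lt /forallP hc; apply/forallP => i; apply/implyP; rewrite !ocE => /andP[d0 dl].
have := implyP (hc i); rewrite !ccE => /(_ dl) ->; rewrite andbT lt0n (offset_eq0 n_gt0).
apply/eqP => ei; subst i.
(* the predecessor of a2 would lie in [a1, a1 + l1] but not in [a2, a2 + l2] *)
have := implyP (hc (shift n_gt0 a2 n.-1)).
rewrite !ccE (offset_shift n_gt0) ?(offset_shift_mod n_gt0); last lia.
have hlt := offset_lt n_gt0 a1 a2; rewrite modn_lt_double; last lia.
by case: ifP => h; lia.
Qed.

Lemma span_len_le_of_cc_incl (a1 l1 a2 l2 : 'I_n) : (l2 < n.-1)%N ->
  incl (cc a1 l1) (cc a2 l2) -> (l1 <= l2)%N.
Proof.
move=> l2lt /forallP hc.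
have d2 : (offset a2 a1 <= l2)%N by have := implyP (hc a1); rewrite !ccE offset_self; apply.
have [big|small] := leqP n.-1 (offset a2 a1 + l1).
  (* [a1, a1 + l1] would reach the point of offset n - 1 from a2 *)
  have := implyP (hc (shift n_gt0 a1 (n.-1 - offset a2 a1))).
  rewrite !ccE (offset_shift n_gt0) ?(offset_shift_mod n_gt0) ?modn_small; lia.
have := implyP (hc (shift n_gt0 a1 l1)).
by rewrite !ccE (offset_shift n_gt0) ?(offset_shift_mod n_gt0) ?modn_small //; lia.
Qed.

Lemma span_leE (a1 l1 a2 l2 : 'I_n) :
  span_le (inl (a1, l1)) (inl (a2, l2)) =
  incl (oc a1 l1) (oc a2 l2) && incl (cc a1 l1) (cc a2 l2).
Proof.
rewrite /span_le /= -!/(incl _ _).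
have [l2e|l2ne] := eqVneq (l2 : nat) n.-1.
  have full : incl (cc a1 l1) (cc a2 l2).
    apply/forallP => i; apply/implyP => _.
    by rewrite ccE l2e; have := offset_lt n_gt0 a2 i; lia.
  by rewrite l2e ltnn andbF full /= andbT.
have l2lt : (l2 < n.-1)%N by have := ltn_ord l2; move/eqP: l2ne; lia.
rewrite l2lt /= orbF andbT.
apply/andP/andP => [[hl hcc] | [_ hcc]]; split => //.
- exact: oc_incl_of_cc_incl.
- exact: span_len_le_of_cc_incl hcc.
Qed.

Lemma span_le_refl (s : tspan n) : span_le s s.
Proof. by case: s => [[a l]|[]] //; rewrite span_leE !incl_refl. Qed.

Lemma span_le_trans (s1 s2 s3 : tspan n) : span_le s1 s2 -> span_le s2 s3 -> span_le s1 s3.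
Proof.
case: s1 => [[a1 l1]|[]] //; case: s3 => [[a3 l3]|[]] //; case: s2 => [[a2 l2]|[]] //.
rewrite !span_leE => /andP[h1 h2] /andP[h3 h4].
by rewrite (incl_trans h1 h3) (incl_trans h2 h4).
Qed.

Lemma span_le_anti (s1 s2 : tspan n) : span_le s1 s2 -> span_le s2 s1 -> s1 = s2.
Proof.
case: s1 => [[a1 l1]|[]] //; case: s2 => [[a2 l2]|[]] //.
rewrite !span_leE => /andP[/forallP o12 /forallP c12] /andP[/forallP o21 /forallP c21].
have ea : a1 = a2.
  have : ~~ oc a2 l2 a1 by apply/negP => /(implyP (o21 a1)); rewrite ocE offset_self.
  have := implyP (c12 a1); rewrite !ccE ocE offset_self => /(_ isT) ->.
  by rewrite andbT lt0n negbK (offset_eq0 n_gt0) => /eqP.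
subst a2; have el : nat_of_ord l1 = l2.
  have := implyP (c12 (shift n_gt0 a1 l1)); have := implyP (c21 (shift n_gt0 a1 l2)).
  by rewrite !ccE !(offset_shift n_gt0) // => /(_ (leqnn _)) h1 /(_ (leqnn _)); lia.
by congr (inl (_, _)); apply: val_inj.
Qed.

Lemma span_lt_trans (s1 s2 s3 : tspan n) : span_lt s1 s2 -> span_lt s2 s3 -> span_lt s1 s3.
Proof.
rewrite /span_lt => /andP[n12 l12] /andP[n23 l23].
rewrite (span_le_trans l12 l23) andbT; apply/eqP => e; subst s3.
by move: n12; rewrite (span_le_anti l12 l23) eqxx.
Qed.

Lemma span_le_eqVlt (s1 s2 : tspan n) : span_le s1 s2 = (s1 == s2) || span_lt s1 s2.
Proof. by rewrite /span_lt; have [->|] := eqVneq s1 s2; rewrite ?span_le_refl. Qed.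


Lemma span_le_lt_trans (s1 s2 s3 : tspan n) : span_le s1 s2 -> span_lt s2 s3 -> span_lt s1 s3.
Proof. by rewrite span_le_eqVlt => /orP[/eqP -> //|]; exact: span_lt_trans. Qed.

Lemma span_ltxx (s : tspan n) : span_lt s s = false.
Proof. by rewrite /span_lt eqxx. Qed.

Lemma span_ltW (s1 s2 : tspan n) : span_lt s1 s2 -> span_le s1 s2.
Proof. by case/andP. Qed.

Lemma elem_in_le (s1 s2 : tspan n) i : span_le s1 s2 -> elem_in s1 i -> elem_in s2 i.
Proof.
case: s1 => [[a1 l1]|[]] //; case: s2 => [[a2 l2]|[]] //.
by rewrite span_leE => /andP[/forallP h _] hi; apply: (implyP (h i)).
Qed.

Lemma vec_has_span_le (F : finFieldType) (al : 'rV[F]_n) (s1 s2 : tspan n) :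
  span_le s1 s2 -> vec_has_span al s1 -> vec_has_span al s2.
Proof.
case: s1 => [[a1 l1]|[]] //; case: s2 => [[a2 l2]|[]] //.
- rewrite span_leE => /andP[_ /forallP h] /= /forallP h2; apply/forallP=> i.
  by apply/implyP=> hi; exact: (implyP (h i) (implyP (h2 i) hi)).
- by move=> _ /eqP ->; apply/forallP=> i; rewrite mxE eqxx.
Qed.

Lemma vec_has_span_notin_cc (F : finFieldType) (al : 'rV[F]_n) (s1 : tspan n) (a l : 'I_n) :
  (forall i, elem_in s1 i -> oc a l i) -> ~~ span_le s1 (inl (a, l)) ->
  vec_has_span al s1 -> forall i, al 0 i != 0 -> ~~ cc a l i.
Proof.
case: s1 => [[a1 l1]|[]] //; last by move/(_ a isT); rewrite ocE offset_self.
move=> ho; rewrite span_leE.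
have -> /= : incl (oc a1 l1) (oc a l) by apply/forallP => i; apply/implyP; exact: ho.
case/forallPn => j; rewrite negb_imply => /andP[cj ncj].
move: ncj; rewrite ccE => ncj.
have ej : j = a1.
  apply/eqP; rewrite -(offset_eq0 n_gt0); apply/negPn/negP; rewrite -lt0n => hpos.
  have : oc a l j by apply: ho; move: cj; rewrite /= ocE ccE hpos.
  by rewrite ocE; lia.
subst j; have l10 : nat_of_ord l1 = 0%N.
  apply/eqP; rewrite -leqn0 leqNgt; apply/negP => l1pos.
  (* a1 + 1 lies in (a1, a1 + l1], hence in (a, a + l], which puts a1 in [a, a + l] *)
  have hlt := offset_lt n_gt0 a a1.
  have := ho (shift n_gt0 a1 1).
  rewrite /= !ocE (offset_shift n_gt0) ?(offset_shift_mod n_gt0) ?modn_lt_double; try lia.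
  by case: ifP; lia.
move=> /forallP hal i /(implyP (hal i)); rewrite ccE l10 leqn0 (offset_eq0 n_gt0) => /eqP ->.
by rewrite ccE.
Qed.

End SpanOrder.

Section ProductTrellis.
Variables (F : finFieldType) (n : nat).
Notation fac_t := (seq (tspan n * 'rV[F]_n)).

Definition factor0 : tspan n * 'rV[F]_n := (sEmpty, 0).

(* A coefficient [g t] for each factor [t] determines the vertex [tvertex fac g i] of the
   product at time [i] (coordinate [g t] on each factor active at [i]) and the label
   sequence [tlabel fac g]; [tcoord] reads the coefficients back off a vertex. *)
Fixpoint tvertex (fac : fac_t) (g : nat -> F) (i : 'I_n) : 'rV[F]_(tdim (tensor_list fac) i) :=
  match fac return 'rV[F]_(tdim (tensor_list fac) i) with
  | [::] => 0
  | p :: fac' => row_mx (g 0%N *: const_mx 1) (tvertex fac' (fun j => g j.+1) i)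
  end.

Definition tlabel (fac : fac_t) (g : nat -> F) : 'rV[F]_n :=
  \sum_(t < size fac) g t *: (nth factor0 fac t).2.

Fixpoint tcoord (fac : fac_t) (i : 'I_n) : 'rV[F]_(tdim (tensor_list fac) i) -> nat -> F :=
  match fac return 'rV[F]_(tdim (tensor_list fac) i) -> nat -> F with
  | [::] => fun _ _ => 0
  | p :: fac' => fun v j =>
      let v : 'rV_(nat_of_bool (elem_in p.1 i) + tdim (tensor_list fac') i) := v in
      if j is j'.+1 then @tcoord fac' i (rsubmx v) j' else \sum_(k < _) lsubmx v 0 k
  end.
Arguments tcoord : clear implicits.

Lemma tlabel_cons p fac g : tlabel (p :: fac) g = g 0%N *: p.2 + tlabel fac (fun j => g j.+1).
Proof. by rewrite /tlabel big_ord_recl. Qed.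

Lemma rV_bool_sumK (b : bool) (x : 'rV[F]_(nat_of_bool b)) : (\sum_(k < _) x 0 k) *: const_mx 1 = x.
Proof.
case: b x => x /=; apply/rowP => k; rewrite ?mxE; last by case: k.
by rewrite big_ord1 mulr1; congr (x _ _); apply: val_inj; case: k => [[]].
Qed.

Lemma scale_const_rV_bool (b : bool) (x y : F) :
  (x *: (const_mx 1 : 'rV[F]_(nat_of_bool b)) = y *: const_mx 1) <-> (b -> x = y).
Proof.
case: b => /=; split => //.
- by move/rowP/(_ 0); rewrite !mxE !mulr1 => -> .
- by move=> h; rewrite h.
- by move=> _; apply/rowP => -[].
Qed.

Lemma tvertex_tcoord fac i v : tvertex fac (tcoord fac i v) i = v.
Proof.
elim: fac v => [|p fac IH] v /=; first by apply/rowP => -[].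
by rewrite rV_bool_sumK IH hsubmxK.
Qed.

Lemma tvertex_eq fac g h i :
  tvertex fac g i = tvertex fac h i <->
  (forall t, (t < size fac)%N -> elem_in (nth factor0 fac t).1 i -> g t = h t).
Proof.
elim: fac g h => [|p fac IH] g h /=.
  by split => // _; apply/rowP => -[].
split.
- move/eq_row_mx => [/scale_const_rV_bool h1 /IH h2] t ht hi.
  case: t ht hi => [|t] /= ht hi; [exact: h1 | exact: h2].
- move=> H; congr row_mx.
  + by apply/scale_const_rV_bool => hi; exact: (H 0%N).
  + by apply/IH => t ht hi; exact: (H t.+1).
Qed.

Lemma tvertex_lin fac c g h i :
  tvertex fac (fun j => c * g j + h j) i = c *: tvertex fac g i + tvertex fac h i.
Proof.
elim: fac g h => [|p fac IH] g h /=; first by rewrite scaler0 addr0.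
by rewrite IH scale_row_mx add_row_mx scalerDl scalerA.
Qed.

Lemma tvertex0 fac i : tvertex fac (fun _ => 0) i = 0.
Proof.
elim: fac => [|p fac IH] //=; by rewrite IH scale0r row_mx0.
Qed.

Lemma tlabel_lin fac c g h :
  tlabel fac (fun j => c * g j + h j) = c *: tlabel fac g + tlabel fac h.
Proof.
rewrite /tlabel scaler_sumr -big_split /=; apply: eq_bigr => t _.
by rewrite scalerDl scalerA.
Qed.

Lemma tlabel0 fac : tlabel fac (fun _ => 0) = 0.
Proof. by rewrite /tlabel big1 // => t _; rewrite scale0r. Qed.

Lemma tensor_edgeP fac i v a w :
  (v, a, w) \in tedges (tensor_list fac) i <->
  exists g, [/\ v = tvertex fac g i, w = tvertex fac g (nxt i) & a = tlabel fac g 0 i].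
Proof.
elim: fac v a w => [|p fac IH] v a w /=.
  rewrite inE; split.
    move/eqP=> [_ -> _]; exists (fun _ => 0); split; try by apply/rowP => -[].
    by rewrite /tlabel big_ord0 mxE.
  move=> [g [_ _ ->]]; rewrite /tlabel big_ord0 mxE.
  by apply/eqP; congr (_, _, _); apply/rowP => -[].
split.
- case/imset2P => e [[v' a'] w'] /imsetP[c _ ->] /IH[g [-> -> ->]] [-> -> ->].
  exists (fun j => if j is j'.+1 then g j' else c); split => //=.
  by rewrite tlabel_cons !mxE.
- move=> [g [-> -> ->]]; rewrite tlabel_cons !mxE.
  pose g' j := g j.+1.
  apply/imset2P; exists (g 0%N *: const_mx 1, g 0%N * p.2 0 i, g 0%N *: const_mx 1)
    (tvertex fac g' i, tlabel fac g' 0 i, tvertex fac g' (nxt i)) => //.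
  + by apply/imsetP; exists (g 0%N).
  + by apply/IH; exists g'.
Qed.

Lemma is_linear_tensor_list (fac : fac_t) : is_linear (tensor_list fac).
Proof.
move=> i; split.
  by apply/tensor_edgeP; exists (fun _ => 0); rewrite !tvertex0 tlabel0 mxE.
move=> c [[v a] w] [[v' a'] w'] /tensor_edgeP[g [-> -> ->]] /tensor_edgeP[h [-> -> ->]].
by apply/tensor_edgeP; exists (fun j => c * g j + h j); rewrite !tvertex_lin tlabel_lin !mxE.
Qed.

End ProductTrellis.
Arguments tcoord {F n} fac i.

Section ProductCycles.
Variables (F : finFieldType) (n : nat) (n_gt0 : (0 < n)%N).
Notation fac_t := (seq (tspan n * 'rV[F]_n)).

(* The full span is read as (0, n - 1); so is the empty one, which never occurs below. *)
Definition span_start (s : tspan n) : 'I_n := if s is inl (a, _) then a else Ordinal n_gt0.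
Definition span_len (s : tspan n) : nat := if s is inl (_, l) then nat_of_ord l else n.-1.

Lemma elem_in_shift s d : s != sEmpty -> (0 < d <= span_len s)%N ->
  elem_in s (shift n_gt0 (span_start s) d).
Proof.
case: s => [[a l]|[]] //= _ hd.
by rewrite ocE offset_shift //; have := ltn_ord l; lia.
Qed.

Lemma elem_in_offset s i : elem_in s i -> (offset (span_start s) i <= span_len s)%N.
Proof.
case: s => [[a l]|[]] //=; first by rewrite ocE => /andP[].
by move=> _; have := offset_lt n_gt0 (Ordinal n_gt0) i; lia.
Qed.

Lemma vec_has_span_offset (al : 'rV[F]_n) s i :
  vec_has_span al s -> al 0 i != 0 -> (offset (span_start s) i <= span_len s)%N.
Proof.
case: s => [[a l]|[]] /=.
- by move=> /forallP h hi; move: (implyP (h i) hi); rewrite ccE.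
- by move=> _ _; have := offset_lt n_gt0 (Ordinal n_gt0) i; lia.
- by move/eqP => ->; rewrite mxE eqxx.
Qed.

Lemma tensor_coords_const (fac : fac_t) (G : 'I_n -> nat -> F) t i :
  (forall j, tvertex fac (G j) (nxt j) = tvertex fac (G (nxt j)) (nxt j)) ->
  let s := (nth (factor0 F n) fac t).1 in
  (t < size fac)%N -> s != sEmpty -> (offset (span_start s) i <= span_len s)%N ->
  G i t = G (span_start s) t.
Proof.
move=> hG s ht hne hd; rewrite -(shift_offset n_gt0 (span_start s) i).
elim: (offset _ i) hd => [|d IH] hd; first by rewrite shift0.
rewrite -IH; last lia.
have := hG (shift n_gt0 (span_start s) d); rewrite nxt_shift => /tvertex_eq/(_ t ht) -> //.
by apply: elem_in_shift => //; lia.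
Qed.

Lemma tensor_cycleP (fac : fac_t) (v : forall i, 'rV[F]_(tdim (tensor_list fac) i)) al :
  (forall p, p \in fac -> vec_has_span p.2 p.1) ->
  is_cycle (tensor_list fac) v al <->
  exists g, (forall i, v i = tvertex fac g i) /\ al = tlabel fac g.
Proof.
move=> hspan; split=> [/forallP hc | [g [hv ->]]]; last first.
  by apply/forallP => i; apply/tensor_edgeP; exists g; rewrite !hv.
have /fin_all_exists [G hG] : forall i, exists g,
   [/\ v i = tvertex fac g i, v (nxt i) = tvertex fac g (nxt i) & al 0 i = tlabel fac g 0 i].
  by move=> i; apply/tensor_edgeP; exact: hc.
have hcons j : tvertex fac (G j) (nxt j) = tvertex fac (G (nxt j)) (nxt j).
  by have [_ <- _] := hG j; have [<- _ _] := hG (nxt j).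
pose st t := (nth (factor0 F n) fac t).1.
exists (fun t => G (span_start (st t)) t); split.
- move=> i; have [-> _ _] := hG i; apply/tvertex_eq => t ht hi.
  apply: tensor_coords_const => //; last exact: elem_in_offset.
  by move: hi; case: (nth _ fac t).1 => [[]|[]].
- apply/rowP => i; have [_ _ ->] := hG i.
  rewrite /tlabel !summxE; apply: eq_bigr => t _; rewrite !mxE.
  have [z|nz] := eqVneq ((nth (factor0 F n) fac t).2 0 i) 0; first by rewrite z !mulr0.
  have hv : vec_has_span (nth (factor0 F n) fac t).2 (st t) by apply: hspan; exact: mem_nth.
  congr (_ * _); apply: tensor_coords_const => //.
  + by move: hv nz; rewrite /st; case: (nth _ fac t).1 => [[]|[]] //= /eqP ->; rewrite mxE eqxx.
  + exact: vec_has_span_offset hv nz.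
Qed.

End ProductCycles.

Section ProductCspan.
Variables (F : finFieldType) (n : nat) (n_gt0 : (0 < n)%N).
Notation fac_t := (seq (tspan n * 'rV[F]_n)).

Definition factor_span (fac : fac_t) (P : pred (tspan n)) : {vspace 'rV[F]_n} :=
  (\sum_(t < size fac | P (nth (factor0 F n) fac t).1) <[(nth (factor0 F n) fac t).2]>)%VS.

Lemma tlabel_in_factor_span (fac : fac_t) (P : pred (tspan n)) (g : nat -> F) :
  (forall t : 'I_(size fac), g t != 0 -> P (nth (factor0 F n) fac t).1) ->
  tlabel fac g \in factor_span fac P.
Proof.
move=> h; rewrite /tlabel (bigID (fun t : 'I_(size fac) => P (nth (factor0 F n) fac t).1)) /=.
rewrite [X in _ + X]big1 ?addr0; last first.
  move=> t ht; have [z|nz] := eqVneq (g t) 0; first by rewrite z scale0r.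
  by move: ht; rewrite h.
by apply: memv_sumr => t _; apply: memvZ; apply: memv_line.
Qed.

Lemma cycle_has_span_transfer (T1 T2 : trellis F n) (v : forall i, 'rV[F]_(tdim T1 i))
    (w : forall i, 'rV[F]_(tdim T2 i)) al (s : tspan n) :
  (forall i, v i = 0 -> w i = 0) -> cycle_has_span T1 v al s -> cycle_has_span T2 w al s.
Proof.
move=> h; case: s => [[a l]|[]] //=.
- move=> /andP[/forallP h1 h2]; rewrite h2 andbT; apply/forallP => i.
  apply/implyP => hw; apply: (implyP (h1 i)); apply/eqP => e; move: hw; by rewrite (h i e) eqxx.
- move=> /andP[/forallP h1 h2]; rewrite h2 andbT; apply/forallP => i.
  by apply/eqP; apply: h; apply/eqP; exact: h1.
Qed.

Lemma tlabel_mem_factor_span_le (fac : fac_t) (g : nat -> F) (a l : 'I_n) :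
  (forall p, p \in fac -> vec_has_span p.2 p.1) ->
  (forall i, ~~ oc a l i -> tvertex fac g i = 0) -> vec_has_span (tlabel fac g) (inl (a, l)) ->
  tlabel fac g \in factor_span fac (span_le^~ (inl (a, l))).
Proof.
move=> hspan hv hs.
pose fa t := nth (factor0 F n) fac t.
have hinc (t : 'I_(size fac)) : g t != 0 -> forall i, elem_in (fa t).1 i -> oc a l i.
  move=> gt i hi; apply/negPn/negP => /hv; rewrite -(tvertex0 fac i).
  by move/tvertex_eq/(_ t (ltn_ord t) hi)/eqP; apply/negP.
pose P (t : 'I_(size fac)) := span_le (fa t).1 (inl (a, l)).
rewrite /tlabel (bigID P) /= in hs *.
set A := \sum_(t | P t) _; set R := \sum_(t | ~~ P t) _.
have -> : R = 0; last by rewrite addr0; apply: memv_sumr => t _; apply: memvZ; apply: memv_line.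
(* the factors of R with nonzero coefficient are points outside [a, a + l], where A vanishes *)
have hA i : ~~ cc a l i -> A 0 i = 0.
  move=> hi; rewrite /A summxE big1 // => t ht; rewrite mxE.
  have := vec_has_span_le n_gt0 ht (hspan _ (mem_nth _ (ltn_ord t))).
  move=> /forallP /(_ i); case: eqP => [->|_] /=; first by rewrite mulr0.
  by rewrite (negbTE hi).
apply/rowP => i; rewrite mxE; case hc: (cc a l i).
- rewrite /R summxE big1 // => t ht; rewrite mxE.
  have [->|nz] := eqVneq (g t) 0; first by rewrite mul0r.
  have [->|nz2] := eqVneq ((fa t).2 0 i) 0; first by rewrite mulr0.
  have hvt := hspan _ (mem_nth (factor0 F n) (ltn_ord t)).
  by move: (vec_has_span_notin_cc n_gt0 (hinc t nz) ht hvt nz2); rewrite hc.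
- move: hs => /forallP /(_ i).
  by rewrite hc implybF negbK mxE hA ?hc // add0r => /eqP.
Qed.

Lemma Cspan_tensor_sub (fac : fac_t) (s : tspan n) :
  (forall p, p \in fac -> vec_has_span p.2 p.1) ->
  (Cspan (tensor_list fac) s <= factor_span fac (span_le^~ s))%VS.
Proof.
move=> hspan; apply/span_subvP => al; rewrite mem_enum inE.
case/existsP => v /andP[/(tensor_cycleP n_gt0 _ _ hspan)[g [hv ->]] hs].
case: s hs => [[a l]|[]] hs.
- move: hs => /= /andP[/forallP hvs hls]; apply: tlabel_mem_factor_span_le => // i hi.
  by rewrite -hv; apply/eqP; apply: contraR hi => /(implyP (hvs i)).
- by apply: tlabel_in_factor_span => t _; case: (nth (factor0 F n) fac t).1 => [[]|[]].
- by move: hs => /= /andP[_ /eqP ->]; exact: mem0v.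
Qed.

Lemma factor_span_sub_Cspan (fac : fac_t) (s : tspan n) :
  (forall p, p \in fac -> vec_has_span p.2 p.1) ->
  (factor_span fac (span_le^~ s) <= Cspan (tensor_list fac) s)%VS.
Proof.
move=> hspan; apply/subv_sumP => t ht; rewrite -memvE.
pose fa := nth (factor0 F n) fac t.
have [->|nz] := eqVneq fa.2 0; first exact: mem0v.
apply: memv_span; rewrite mem_enum inE.
pose g j := if j == nat_of_ord t then (1 : F) else 0.
have hlab : tlabel fac g = fa.2.
  rewrite /tlabel (bigD1 t) //= big1 ?addr0 /g ?eqxx ?scale1r // => j hj.
  by rewrite ifN ?scale0r.
apply/existsP; exists [ffun i => tvertex fac g i]; apply/andP; split.
  by apply/(tensor_cycleP n_gt0 _ _ hspan); exists g; split => [i|//]; rewrite ffunE.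
have hvt : vec_has_span fa.2 fa.1 by apply: hspan; exact: mem_nth.
rewrite -hlab; case: s ht => [[a l]|[]] ht //=; last first.
  by move: nz; rewrite (span_le_anti n_gt0 ht isT) in hvt; rewrite (eqP hvt) eqxx.
rewrite hlab; move: (vec_has_span_le n_gt0 ht hvt) => /= ->; rewrite andbT.
apply/forallP => i; apply/implyP; rewrite ffunE; apply: contraR => hno.
rewrite -(tvertex0 fac i); apply/eqP/tvertex_eq => j hj hi; rewrite /g.
case: eqP => // ej; move: hi; rewrite ej => /(elem_in_le n_gt0 ht).
by rewrite /= (negbTE hno).
Qed.

Lemma Cspan_tensor (fac : fac_t) (s : tspan n) :
  (forall p, p \in fac -> vec_has_span p.2 p.1) ->
  Cspan (tensor_list fac) s = factor_span fac (span_le^~ s).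
Proof.
by move=> hspan; apply: subv_anti; rewrite Cspan_tensor_sub ?factor_span_sub_Cspan.
Qed.

End ProductCspan.

Section FactorSpan.
Variables (F : finFieldType) (n : nat) (n_gt0 : (0 < n)%N).
Notation fac_t := (seq (tspan n * 'rV[F]_n)).

Lemma factor_span_mono (fac : fac_t) (P Q : pred (tspan n)) :
  (forall x, P x -> Q x) -> (factor_span fac P <= factor_span fac Q)%VS.
Proof.
by move=> h; apply/subv_sumP => t ht; apply: (sumv_sup t) => //; exact: h.
Qed.

Lemma factor_span_le_split (fac : fac_t) s :
  factor_span fac (span_le^~ s) = (factor_span fac (pred1 s) + factor_span fac (span_lt^~ s))%VS.
Proof.
apply: subv_anti; apply/andP; split.
- apply/subv_sumP => t; rewrite (span_le_eqVlt n_gt0) => /orP[he|hl].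
  + by apply: subv_trans (addvSl _ _); apply: (sumv_sup t).
  + by apply: subv_trans (addvSr _ _); apply: (sumv_sup t).
- rewrite subv_add; apply/andP; split; apply: factor_span_mono => x /=.
  + by move/eqP ->; exact: span_le_refl.
  + exact: span_ltW.
Qed.

Lemma factor_span_lt_sum (fac : fac_t) s :
  (\sum_(s' | span_lt s' s) factor_span fac (span_le^~ s'))%VS = factor_span fac (span_lt^~ s).
Proof.
apply: subv_anti; apply/andP; split.
- apply/subv_sumP => s' hs'; apply: factor_span_mono => x hx.
  exact: span_le_lt_trans hx hs'.
- apply/subv_sumP => t ht; apply: (sumv_sup (nth (factor0 F n) fac t).1) => //.
  by apply: (sumv_sup t) => //; exact: span_le_refl.
Qed.

Lemma span_filter_factor_span (fac : fac_t) s :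
  (<<[seq p.2 | p <- fac & p.1 == s]>> = factor_span fac (pred1 s))%VS.
Proof.
by rewrite span_def big_map big_filter (big_nth (factor0 F n)) big_mkord.
Qed.

Lemma factor_span_ord (fac : fac_t) (P : pred (tspan n)) k : size fac = k ->
  factor_span fac P =
    (\sum_(t < k | P (nth (factor0 F n) fac t).1) <[(nth (factor0 F n) fac t).2]>)%VS.
Proof.
by move=> hk; rewrite /factor_span; case: k / hk.
Qed.

End FactorSpan.

Section Invariance.
Variables (F : finFieldType) (n : nat).

Lemma trellis_equiv_sym (T1 T2 : trellis F n) : trellis_equiv T1 T2 -> trellis_equiv T2 T1.
Proof.
move=> [f [hb hf]].
have /fin_all_exists [g hg] : forall i, exists g : 'rV[F]_(tdim T2 i) -> 'rV[F]_(tdim T1 i),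
    cancel (f i) g /\ cancel g (f i).
  by move=> i; case: (hb i) => g h1 h2; exists g.
exists g; split.
  by move=> i; exists (f i); [exact: (hg i).2 | exact: (hg i).1].
by move=> i v a w; rewrite hf !(hg _).2.
Qed.

Lemma trellis_equiv_trans (T1 T2 T3 : trellis F n) :
  trellis_equiv T1 T2 -> trellis_equiv T2 T3 -> trellis_equiv T1 T3.
Proof.
move=> [f [hb hf]] [g [hb' hg]]; exists (fun i x => g i (f i x)); split.
  by move=> i; apply: bij_comp.
by move=> i v a w; rewrite hf hg.
Qed.

Lemma is_cycle_lin (T : trellis F n) (v w : forall i, 'rV[F]_(tdim T i)) al bl c :
  is_linear T -> is_cycle T v al -> is_cycle T w bl ->
  is_cycle T (fun i => c *: v i + w i) (c *: al + bl).
Proof.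
move=> hl /forallP hv /forallP hw; apply/forallP => i.
have := (hl i).2 c _ _ (hv i) (hw i); by rewrite /= !mxE.
Qed.

Lemma is_cycle0 (T : trellis F n) : is_linear T -> is_cycle T (fun _ => 0) 0.
Proof. by move=> hl; apply/forallP => i; rewrite mxE; exact: (hl i).1. Qed.

Lemma is_cycle_map (T1 T2 : trellis F n) f v al :
  (forall i v a w, ((v, a, w) \in tedges T1 i) = ((f i v, a, f (nxt i) w) \in tedges T2 i)) ->
  is_cycle T1 v al = is_cycle T2 (fun i => f i (v i)) al.
Proof. by move=> hf; apply: eq_forallb => i; rewrite hf. Qed.

Lemma is_cycle_equiv (T1 T2 : trellis F n) (v : forall i, 'rV[F]_(tdim T1 i)) al s :
  is_linear T1 -> is_linear T2 -> trellis_equiv T1 T2 ->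
  is_cycle T1 v al -> cycle_has_span T1 v al s ->
  exists w : {dffun forall i, 'rV[F]_(tdim T2 i)}, is_cycle T2 w al && cycle_has_span T2 w al s.
Proof.
move=> hl1 hl2 [f [_ hf]] hc hs.
have c1 : is_cycle T2 (fun i => f i (v i)) al by rewrite -(@is_cycle_map _ _ f v al hf).
have c0 : is_cycle T2 (fun i => f i 0) 0.
  by rewrite -(@is_cycle_map _ _ f (fun _ => 0) 0 hf); exact: is_cycle0.
(* f need not fix 0, so subtract the image of the zero cycle *)
exists [ffun i => (-1) *: f i 0 + f i (v i)]; apply/andP; split.
  have := is_cycle_lin (-1) hl2 c0 c1; rewrite scaler0 add0r.
  by apply: etrans; apply: eq_forallb => i; rewrite !ffunE.
apply: cycle_has_span_transfer hs => i hvi; rewrite ffunE hvi.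
by rewrite scaleN1r addNr.
Qed.

Lemma Cspan_equiv (T1 T2 : trellis F n) s :
  is_linear T1 -> is_linear T2 -> trellis_equiv T1 T2 -> Cspan T1 s = Cspan T2 s.
Proof.
move=> hl1 hl2 heq; rewrite /Cspan.
apply: (congr1 (fun A : {set 'rV[F]_n} => <<enum A>>%VS)).
apply/setP => al; rewrite !inE; apply/existsP/existsP => -[v /andP[hc hs]].
- exact: is_cycle_equiv hl1 hl2 heq hc hs.
- exact: is_cycle_equiv hl2 hl1 (trellis_equiv_sym heq) hc hs.
Qed.

End Invariance.

Section Factorization.
Variables (F : finFieldType) (n : nat) (n_gt0 : (0 < n)%N).
Notation fac_t := (seq (tspan n * 'rV[F]_n)).

Lemma Cspan_factorization (T : trellis F n) (fac : fac_t) (s : tspan n) :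
  is_linear T -> trellis_equiv T (tensor_list fac) ->
  (forall p, p \in fac -> vec_has_span p.2 p.1) ->
  Cspan T s = factor_span fac (span_le^~ s).
Proof.
move=> hlin heq hspan.
by rewrite (Cspan_equiv s hlin (is_linear_tensor_list fac) heq) (Cspan_tensor n_gt0 s hspan).
Qed.

Lemma factor_span_le_decomp (fac : fac_t) (s : tspan n) :
  factor_span fac (span_le^~ s) = (<<[seq p.2 | p <- fac & p.1 == s]>>
    + \sum_(s' : tspan n | span_lt s' s) factor_span fac (span_le^~ s'))%VS.
Proof.
by rewrite (factor_span_lt_sum n_gt0) span_filter_factor_span (factor_span_le_split n_gt0).
Qed.

End Factorization.

Section CoordinateChange.
Variables (F : finFieldType) (n k : nat).
Notation fac_t := (seq (tspan n * 'rV[F]_n)).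

(* [rowfun y j] is the j-th entry of [y], and 0 for [j >= k]. *)
Definition rowfun (y : 'rV[F]_k) (j : nat) : F := \sum_(t < k | nat_of_ord t == j) y 0 t.
Definition funrow (g : nat -> F) : 'rV[F]_k := \row_(t < k) g t.

Lemma rowfunE y (t : 'I_k) : rowfun y t = y 0 t.
Proof.
by rewrite /rowfun (big_pred1 t) // => u; rewrite /= -(inj_eq val_inj).
Qed.

Lemma tlabel_ext (fac : fac_t) g h :
  (forall t, (t < size fac)%N -> g t = h t) -> tlabel fac g = tlabel fac h.
Proof. by move=> e; apply: eq_bigr => t _; rewrite e. Qed.

Lemma tvertex_ext (fac : fac_t) g h i :
  (forall t, (t < size fac)%N -> g t = h t) -> tvertex fac g i = tvertex fac h i.
Proof. by move=> e; apply/tvertex_eq => t ht _; exact: e. Qed.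

Lemma tlabel_ord (fac : fac_t) g :
  size fac = k -> tlabel fac g = \sum_(t < k) g t *: (nth (factor0 F n) fac t).2.
Proof.
by move=> hk; rewrite /tlabel; case: k / hk.
Qed.

Variables (fac fac0 : fac_t) (hk : size fac = k) (hk0 : size fac0 = k) (Phi : 'M[F]_k).
Hypothesis Phi_label : forall t : 'I_k,
  \sum_(u < k) Phi t u *: (nth (factor0 F n) fac0 u).2 = (nth (factor0 F n) fac t).2.
Hypothesis Phi_support : forall i (t u : 'I_k),
  Phi t u != 0 -> elem_in (nth (factor0 F n) fac0 u).1 i ->
  elem_in (nth (factor0 F n) fac t).1 i.
Hypothesis Phi_unit : Phi \in unitmx.
Hypothesis Phi_support_inv : forall i (y : 'rV[F]_k),
  (forall u : 'I_k, elem_in (nth (factor0 F n) fac0 u).1 i -> (y *m Phi) 0 u = 0) ->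
  forall t : 'I_k, elem_in (nth (factor0 F n) fac t).1 i -> y 0 t = 0.

Definition coord_change (g : nat -> F) : nat -> F := rowfun (funrow g *m Phi).

Lemma tlabel_coord_change g : tlabel fac0 (coord_change g) = tlabel fac g.
Proof.
rewrite (tlabel_ord _ hk0) (tlabel_ord _ hk) /coord_change.
under eq_bigr do rewrite rowfunE mxE scaler_suml.
rewrite exchange_big /=; apply: eq_bigr => t _.
rewrite -Phi_label scaler_sumr; apply: eq_bigr => u _.
by rewrite mxE scalerA.
Qed.

Lemma tvertex_coord_change_eq g h i :
  (forall t, (t < size fac)%N -> elem_in (nth (factor0 F n) fac t).1 i -> g t = h t) ->
  tvertex fac0 (coord_change g) i = tvertex fac0 (coord_change h) i.
Proof.
move=> e; apply/tvertex_eq => u hu hi; rewrite hk0 in hu.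
rewrite /coord_change (rowfunE _ (Ordinal hu)) (rowfunE _ (Ordinal hu)) !mxE.
apply: eq_bigr => t _; rewrite !mxE.
have [z|nz] := eqVneq (Phi t (Ordinal hu)) 0; first by rewrite z !mulr0.
by rewrite e // ?hk // (Phi_support nz hi).
Qed.

Definition vertex_map i (v : 'rV[F]_(tdim (tensor_list fac) i)) :
    'rV[F]_(tdim (tensor_list fac0) i) :=
  tvertex fac0 (coord_change (tcoord fac i v)) i.

Lemma vertex_map_tvertex g i : vertex_map (tvertex fac g i) = tvertex fac0 (coord_change g) i.
Proof.
apply: tvertex_coord_change_eq => t ht hi.
have := (tvertex_eq fac (tcoord fac i (tvertex fac g i)) g i).1 (tvertex_tcoord _); apply => //.
Qed.

Lemma vertex_map_inj i : injective (@vertex_map i).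
Proof.
move=> v v' e.
rewrite -(tvertex_tcoord v) -(tvertex_tcoord v').
apply/tvertex_eq => t ht hi; rewrite hk in ht.
suff H : (funrow (tcoord fac i v) - funrow (tcoord fac i v')) 0 (Ordinal ht) = 0.
  by move: H; rewrite !mxE; move/eqP; rewrite subr_eq0 => /eqP.
apply: (Phi_support_inv (t := Ordinal ht) _ hi).
move=> u hu; rewrite mulmxBl mxE.
move: e; rewrite /vertex_map => /tvertex_eq /(_ u); rewrite hk0 => /(_ (ltn_ord u) hu).
rewrite /coord_change !rowfunE => e1.
have -> : (- (funrow (tcoord fac i v') *m Phi)) 0 u = - ((funrow (tcoord fac i v') *m Phi) 0 u) by rewrite [LHS]mxE.
by rewrite e1 subrr.
Qed.

Definition coord_change_inv (g0 : nat -> F) : nat -> F := rowfun (funrow g0 *m invmx Phi).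

Lemma coord_changeK g0 t : (t < k)%N -> coord_change (coord_change_inv g0) t = g0 t.
Proof.
move=> ht; rewrite /coord_change (rowfunE _ (Ordinal ht)).
have -> : funrow (coord_change_inv g0) = funrow g0 *m invmx Phi.
  by apply/rowP => u; rewrite mxE /coord_change_inv rowfunE.
by rewrite -mulmxA mulVmx // mulmx1 mxE.
Qed.

Lemma tensor_list_equiv_mx : trellis_equiv (tensor_list fac) (tensor_list fac0).
Proof.
exists vertex_map; split.
  move=> i; exists (fun v0 => tvertex fac (coord_change_inv (tcoord fac0 i v0)) i).
    move=> v; apply: vertex_map_inj; rewrite vertex_map_tvertex -{2}(tvertex_tcoord (vertex_map v)).
    by apply: tvertex_ext => t ht; rewrite coord_changeK // -hk0.
  move=> v0; rewrite vertex_map_tvertex -{2}(tvertex_tcoord v0).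
  by apply: tvertex_ext => t ht; rewrite coord_changeK // -hk0.
move=> i v a w; apply/idP/idP.
- move/tensor_edgeP => [g [-> -> ->]]; apply/tensor_edgeP; exists (coord_change g).
  by rewrite !vertex_map_tvertex tlabel_coord_change.
- move/tensor_edgeP => [g0 [e1 e2 e3]]; apply/tensor_edgeP; exists (coord_change_inv g0).
  have hv : forall j, tvertex fac0 (coord_change (coord_change_inv g0)) j = tvertex fac0 g0 j.
    by move=> j; apply: tvertex_ext => t ht; rewrite coord_changeK // -hk0.
  split.
  + by apply: vertex_map_inj; rewrite vertex_map_tvertex hv.
  + by apply: vertex_map_inj; rewrite vertex_map_tvertex hv.
  + rewrite e3 -tlabel_coord_change.
    have -> // : tlabel fac0 (coord_change (coord_change_inv g0)) = tlabel fac0 g0.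
    by apply: tlabel_ext => t ht; rewrite coord_changeK // -hk0.
Qed.

End CoordinateChange.

Section FreeExtension.
Variables (F : fieldType) (V : vectType F).

Lemma lift_mod_notin_span (A R : {vspace V}) (e : V) (es ds0 : seq V) :
  (R <= A)%VS -> e \in A -> (A <= <<ds0>> + R + <<e :: es>>)%VS ->
  (size ds0 + (size es).+1)%N = \dim A ->
  exists d, [/\ d \in A, d - e \in R & d \notin <<ds0>>%VS].
Proof.
move=> hRA heA hA hsz.
have [ein|eout] := boolP (e \in <<ds0>>%VS); last by exists e; rewrite subrr mem0v.
have [sR|/subvPn [r rR rout]] := boolP (R <= <<ds0>>)%VS.
  (* otherwise A would lie in <<ds0 ++ es>>, of dimension < \dim A *)
  have h1 : (A <= <<ds0>> + <<es>>)%VS.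
    apply: subv_trans hA _; rewrite !subv_add addvSl (subv_trans sR (addvSl _ _)) /=.
    rewrite span_cons subv_add addvSr andbT.
    by apply: subv_trans (addvSl _ _); rewrite -memvE.
  have := dimvS h1; have := dim_span ds0; have := dim_span es.
  by have := (dimv_add_leqif <<ds0>>%VS <<es>>%VS).1; lia.
exists (e + r); split.
- by apply: memvD => //; apply: (subvP hRA).
- by rewrite addrC addKr.
- by apply: contra rout => hin; rewrite -(addKr e r) addrC memvB.
Qed.

Lemma free_extend_mod (A R : {vspace V}) (es ds0 : seq V) :
  (R <= A)%VS -> {subset es <= A} -> {subset ds0 <= A} -> free ds0 ->
  (A <= <<ds0>> + R + <<es>>)%VS -> (size ds0 + size es)%N = \dim A ->
  exists ds : seq V, [/\ size ds = size es, {subset ds <= A},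
     (forall j, (j < size es)%N -> nth 0 ds j - nth 0 es j \in R) & free (ds0 ++ ds)].
Proof.
elim: es ds0 => [|e es IH] ds0 hRA hes hds0 hfree hA hsz.
  by exists [::]; split => //; rewrite cats0.
have heA : e \in A by apply: hes; rewrite inE eqxx.
have [d [hdA hde hd0]] := lift_mod_notin_span hRA heA hA hsz.
have hA' : (A <= <<d :: ds0>> + R + <<es>>)%VS.
  apply: subv_trans hA _.
  have hds : (<<ds0>> <= <<d :: ds0>>)%VS by rewrite span_cons addvSr.
  have hdd : d \in <<d :: ds0>>%VS.
    by rewrite span_cons; apply: (subvP (addvSl _ _)); exact: memv_line.
  rewrite !subv_add; apply/andP; split; first (apply/andP; split).
  - exact: subv_trans hds (subv_trans (addvSl _ R) (addvSl _ _)).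
  - exact: subv_trans (addvSr _ _) (addvSl _ _).
  - rewrite span_cons subv_add; apply/andP; split; last by rewrite addvSr.
    rewrite -memvE (_ : e = d - (d - e)); last by rewrite opprB addrC subrK.
    apply: memvB; first by apply: (subvP (addvSl _ _)); apply: (subvP (addvSl _ _)); exact: hdd.
    by apply: (subvP (addvSl _ _)); apply: (subvP (addvSr _ _)).
have hsub : {subset d :: ds0 <= A}.
  by move=> x; rewrite inE => /orP[/eqP ->|]; [exact: hdA | exact: hds0].
have hfr : free (d :: ds0) by rewrite free_cons hd0 hfree.
have hsz' : (size (d :: ds0) + size es)%N = \dim A by move: hsz => /=; rewrite addSn addnS.
have hes' : {subset es <= A} by move=> x hx; apply: hes; rewrite inE hx orbT.
have [ds [h1 h2 h3 h4]] := IH (d :: ds0) hRA hes' hsub hfr hA' hsz'.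
exists (d :: ds); split => /=.
+ by rewrite h1.
+ by move=> x; rewrite inE => /orP[/eqP ->|]; [exact: hdA | exact: h2].
+ by move=> [|j] hj //=; apply: h3.
+ have hp : perm_eq ([:: d] ++ ds0 ++ ds) (ds0 ++ [:: d] ++ ds) by apply/permPl; exact: perm_catCA.
  by rewrite -(perm_free hp).
Qed.

End FreeExtension.

Section SumLines.
Variables (F : fieldType) (V : vectType F) (I : finType).

Lemma memv_sum_lines (P : pred I) (w : I -> V) y :
  y \in (\sum_(i | P i) <[w i]>)%VS -> exists c : I -> F, y = \sum_(i | P i) c i *: w i.
Proof.
move/memv_sumP => [vs hvs ->].
have /fin_all_exists [c hc] : forall i, exists c : F, P i -> vs i = c *: w i.
  move=> i; case: (boolP (P i)) => pi; last by exists 0.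
  by have /vlineP [c ->] := hvs i pi; exists c.
by exists c; apply: eq_bigr => i pi; rewrite hc.
Qed.

End SumLines.

Section DeltaRows.
Variables (F : fieldType) (k : nat).

Lemma span_delta_entry (X : seq 'I_k) y u : u \notin X ->
  y \in <<[seq delta_mx ord0 v : 'rV[F]_k | v <- X]>>%VS -> y 0 u = 0 :> F.
Proof.
move=> hu hin; rewrite (coord_span (X := in_tuple [seq delta_mx ord0 v : 'rV[F]_k | v <- X]) hin).
rewrite summxE big1 // => i _.
have hi : (i < size X)%N by rewrite -(size_map (fun v => delta_mx ord0 v : 'rV[F]_k)).
rewrite mxE (nth_map u _ _ hi) mxE eqxx /=.
case: eqP => [e|]; last by rewrite mulr0.
by move: hu; rewrite e mem_nth.
Qed.

Lemma free_delta_rows (X : seq 'I_k) :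
  uniq X -> free [seq delta_mx ord0 v : 'rV[F]_k | v <- X] :> bool.
Proof.
elim: X => [|u X IH] /=; first by rewrite /free span_nil dimv0.
move=> /andP[hu hX]; rewrite free_cons IH // andbT; apply/negP => hin.
by have := span_delta_entry hu hin; rewrite mxE !eqxx /= => /eqP; rewrite oner_eq0.
Qed.

End DeltaRows.

Section ChangeMatrix.
Variables (F : finFieldType) (n : nat) (n_gt0 : (0 < n)%N) (k : nat).
Variables (s s0 : 'I_k -> tspan n) (al be : 'I_k -> 'rV[F]_n).

Local Notation uv u := (delta_mx ord0 u : 'rV[F]_k).
Definition span_be (P : pred (tspan n)) : {vspace 'rV[F]_n} :=
  (\sum_(u < k | P (s0 u)) <[be u]>)%VS.
Definition span_al (P : pred (tspan n)) : {vspace 'rV[F]_n} := (\sum_(t < k | P (s t)) <[al t]>)%VS.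
Lemma memv_span_al t (P : pred (tspan n)) : P (s t) -> al t \in span_al P.
Proof. by move=> hP; apply: (subvP (sumv_sup _ hP (subvv _))); exact: memv_line. Qed.

Lemma memv_span_be u (P : pred (tspan n)) : P (s0 u) -> be u \in span_be P.
Proof. by move=> hP; apply: (subvP (sumv_sup _ hP (subvv _))); exact: memv_line. Qed.

Definition lincomb : 'Hom('rV[F]_k, 'rV[F]_n) := linfun (mulmxr (\matrix_(u, j) be u 0 j)).

Lemma lincombE y : lincomb y = \sum_(u < k) y 0 u *: be u.
Proof.
rewrite lfunE /= /mulmxr; apply/rowP => j; rewrite !mxE summxE.
by apply: eq_bigr => u _; rewrite !mxE.
Qed.

Lemma lincomb_delta u : lincomb (uv u) = be u.
Proof.
rewrite lincombE (bigD1 u) //= big1 ?addr0; first by rewrite mxE !eqxx scale1r.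
by move=> v hv; rewrite mxE eqxx /= (negbTE hv) scale0r.
Qed.

Hypothesis HL1 : forall t, al t \in (span_be (pred1 (s t)) + span_be (span_lt^~ (s t)))%VS.
Hypothesis HL2 : forall sp, (span_be (pred1 sp) <= span_al (pred1 sp) + span_be (span_lt^~ sp))%VS.
Hypothesis Hcnt : forall sp, #|[pred t | s t == sp]| = #|[pred u | s0 u == sp]|.

Section ClassRows.
Variable sp : tspan n.

Let Il := enum [pred t | s t == sp].
Let VJ := <<[seq uv u | u <- enum [pred u | s0 u == sp]]>>%VS.
Let Z := span_be (span_lt^~ sp).
Let R := (VJ :&: lincomb @^-1: Z)%VS.

Lemma class_coord0 y u : y \in VJ -> s0 u != sp -> y 0 u = 0.
Proof. by move=> hy hu; apply: span_delta_entry hy; rewrite mem_enum. Qed.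

Lemma class_delta u : s0 u == sp -> uv u \in VJ.
Proof. by move=> hu; apply: memv_span; apply: map_f; rewrite mem_enum. Qed.

Lemma class_lifts : exists lift : 'I_k -> 'rV[F]_k,
  forall t, s t == sp -> lift t \in VJ /\ lincomb (lift t) - al t \in Z.
Proof.
suff /fin_all_exists[lift hlift] : forall t, exists l : 'rV[F]_k,
    s t == sp -> l \in VJ /\ lincomb l - al t \in Z by exists lift.
move=> t; case: (boolP (s t == sp)) => ht; last by exists 0.
have := HL1 t; rewrite (eqP ht) => /memv_addP [a ha [z hz e]].
have [c ec] := memv_sum_lines ha.
exists (\sum_(u | s0 u == sp) c u *: uv u) => _; split.
  by apply: rpred_sum => u hu; apply: memvZ; apply: class_delta.
rewrite linear_sum /=.
have -> : \sum_(u | s0 u == sp) lincomb (c u *: uv u) = a.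
  by rewrite ec; apply: eq_bigr => u _; rewrite linearZ /= lincomb_delta.
by rewrite e opprD addrA subrr add0r rpredN.
Qed.

Variables (lift : 'I_k -> 'rV[F]_k).
Hypothesis hlift : forall t, s t == sp -> lift t \in VJ /\ lincomb (lift t) - al t \in Z.

Lemma class_coords_sub : (VJ <= <<[::]>> + R + <<[seq lift t | t <- Il]>>)%VS.
Proof.
apply/span_subvP => x0 /mapP [u hu ->]; move: hu; rewrite mem_enum /= => hu.
have /memv_addP [a ha [z hz e]] := subvP (HL2 sp) _ (memv_span_be (P := pred1 sp) hu).
have [d ed] := memv_sum_lines ha.
pose x := \sum_(t | s t == sp) d t *: lift t.
have hx : x \in <<[seq lift t | t <- Il]>>%VS.
  apply: rpred_sum => t ht; apply: memvZ; apply: memv_span; apply: map_f.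
  by rewrite mem_enum.
have hxR : uv u - x \in R.
  rewrite memv_cap -memv_preim; apply/andP; split.
    apply: memvB; first exact: class_delta.
    by apply: rpred_sum => t ht; apply: memvZ; case: (hlift ht).
  rewrite linearB /= lincomb_delta e ed /x linear_sum /=.
  have -> : \sum_(t | s t == sp) lincomb (d t *: lift t) =
            \sum_(t | s t == sp) d t *: al t +
            \sum_(t | s t == sp) d t *: (lincomb (lift t) - al t).
    rewrite -big_split /=; apply: eq_bigr => t _.
    by rewrite linearZ /= -scalerDr addrC subrK.
  rewrite opprD addrACA subrr add0r.
  by apply: memvB => //; apply: rpred_sum => t ht; apply: memvZ; case: (hlift ht).
rewrite (_ : uv u = 0 + (uv u - x) + x); last by rewrite add0r subrK.
by apply: memv_add => //; apply: memv_add; rewrite ?span_nil ?mem0v.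
Qed.

End ClassRows.

Lemma class_basis sp : exists phi : 'I_k -> 'rV[F]_k,
  [/\ forall t, phi t \in <<[seq uv u | u <- enum [pred u | s0 u == sp]]>>%VS,
      forall t, s t == sp -> lincomb (phi t) - al t \in span_be (span_lt^~ sp)
    & forall y : 'rV[F]_k, \sum_(t | s t == sp) y 0 t *: phi t = 0 ->
        forall t, s t == sp -> y 0 t = 0].
Proof.
set Il := enum [pred t | s t == sp]; set VJ := <<_>>%VS; set Z := span_be _.
have [lift hlift] := class_lifts sp.
have hes : {subset [seq lift t | t <- Il] <= VJ}.
  by move=> x /mapP [t ht ->]; move: ht; rewrite mem_enum => ht; case: (hlift t ht).
have hsz : size [seq lift t | t <- Il] = \dim VJ.
  have /eqP -> : free [seq uv u | u <- enum [pred u | s0 u == sp]].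
    exact/free_delta_rows/enum_uniq.
  by rewrite !size_map -!cardE Hcnt.
have hs0 : {subset [::] <= VJ} by [].
have [ds [h1 h2 h3 h4]] := free_extend_mod (capvSl _ _) hes hs0 (nil_free _)
  (class_coords_sub hlift) hsz.
pose phi t := nth 0 ds (index t Il).
exists phi; split.
- move=> t; rewrite /phi; case: (ltnP (index t Il) (size ds)) => hi.
    by apply: h2; exact: mem_nth.
  by rewrite nth_default // mem0v.
- move=> t ht.
  have hti : t \in Il by rewrite mem_enum.
  have hidx : (index t Il < size [seq lift t | t <- Il])%N by rewrite size_map index_mem.
  have := h3 _ hidx; rewrite (nth_map t) ?index_mem // nth_index // memv_cap -memv_preim.
  case/andP => _ hR.
  rewrite (_ : lincomb (phi t) - al t = lincomb (phi t - lift t) + (lincomb (lift t) - al t)).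
    by apply: memvD => //; case: (hlift t ht).
  by rewrite linearB /= addrA subrK.
- move=> y hy t ht.
  move: h4 => /= /(freeP (X := in_tuple ds)) hfree.
  pose kk := fun j : 'I_(size ds) => y 0 (nth t Il j).
  have hsum : \sum_(i < size ds) kk i *: (in_tuple ds)`_i = 0.
    rewrite /kk /= -(big_mkord xpredT (fun i => y 0 (nth t Il i) *: nth 0 ds i)) h1 size_map.
    apply: etrans hy; rewrite -big_enum /= -/Il (big_nth t).
    apply: eq_big_nat => j hj; rewrite /phi index_uniq ?enum_uniq //; lia.
  have hj : (index t Il < size ds)%N by rewrite h1 size_map index_mem mem_enum.
  by have := hfree kk hsum (Ordinal hj); rewrite /kk /= nth_index ?mem_enum.
Qed.

Definition class_rows_spec sp (rows : 'I_k -> 'rV[F]_k) :=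
  [/\ forall t, s t = sp -> lincomb (rows t) = al t,
      forall t u, s t = sp -> rows t 0 u != 0 -> s0 u = sp \/ span_lt (s0 u) sp
    & forall y : 'rV[F]_k, (forall u, s0 u = sp -> \sum_(t | s t == sp) y 0 t * rows t 0 u = 0) ->
        forall t, s t = sp -> y 0 t = 0].

Lemma class_rows sp : exists rows, class_rows_spec sp rows.
Proof.
have [phi [hphiV hphiZ hfree]] := class_basis sp.
(* correct each phi t by coordinates on factors strictly below sp *)
have /fin_all_exists [c hc] : forall t, exists c : 'I_k -> F, s t == sp ->
    al t - lincomb (phi t) = \sum_(u | span_lt (s0 u) sp) c u *: be u.
  move=> t; case: (boolP (s t == sp)) => ht; last by exists (fun _ => 0).
  have : al t - lincomb (phi t) \in span_be (span_lt^~ sp) by rewrite -opprB rpredN; exact: hphiZ.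
  by move/memv_sum_lines => [c' e']; exists c'.
pose lam t : 'rV[F]_k := \row_u (if span_lt (s0 u) sp then c t u else 0).
exists (fun t => phi t + lam t); split.
- move=> t /eqP ht; rewrite linearD /= (lincombE (lam t)).
  have -> : \sum_(u < k) lam t 0 u *: be u = al t - lincomb (phi t).
    rewrite (hc t ht) [in RHS]big_mkcond /=; apply: eq_bigr => u _; rewrite mxE.
    by case: ifP => _; rewrite ?scale0r.
  by rewrite addrC subrK.
- move=> t u ht; rewrite mxE => hne.
  case: (eqVneq (phi t 0 u) 0) => [z|nz].
    right; move: hne; rewrite z add0r mxE; by case: ifP => // _; rewrite eqxx.
  left; apply/eqP; apply/negPn/negP => hu; move: nz; by rewrite (class_coord0 (hphiV t) hu) eqxx.
- move=> y hy t /eqP ht; apply: hfree ht; apply/rowP => u; rewrite mxE.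
  case: (boolP (s0 u == sp)) => hu; last first.
    by apply: class_coord0 hu; apply: rpred_sum => t' _; apply: memvZ.
  rewrite -(hy u (eqP hu)) summxE; apply: eq_bigr => t' _; rewrite !mxE.
  by rewrite (eqP hu) span_ltxx addr0.
Qed.

Definition span_height (x : tspan n) := #|[set z | span_lt x z]|.

Lemma span_height_lt x z : span_lt x z -> (span_height z < span_height x)%N.
Proof.
move=> hxz; apply: proper_card; apply/properP; split.
  by apply/subsetP => w; rewrite !inE => hzw; exact: (span_lt_trans n_gt0 hxz hzw).
by exists z; rewrite !inE ?hxz ?span_ltxx.
Qed.

Section ChangeMx.
Variable rows : tspan n -> 'I_k -> 'rV[F]_k.
Hypothesis hrows : forall sp, class_rows_spec sp (rows sp).

Definition change_mx : 'M[F]_k := \matrix_(t, u) rows (s t) t 0 u.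

(* row t of change_mx only involves factors u whose span is below s t; induct on span_height *)
Lemma change_mx_upward_inj (Q : pred (tspan n)) :
  (forall x z, Q x -> span_lt x z -> Q z) ->
  forall y : 'rV[F]_k, (forall u, Q (s0 u) -> (y *m change_mx) 0 u = 0) ->
  forall t, Q (s t) -> y 0 t = 0.
Proof.
move=> hQ y hy.
suff H N t : (span_height (s t) < N)%N -> Q (s t) -> y 0 t = 0.
  by move=> t; apply: (H (span_height (s t)).+1).
elim: N t => [|N IH] t // hN hQt.
have [_ htri hBI] := hrows (s t).
apply: (hBI y) => // u hu.
have := hy u; rewrite hu => /(_ hQt); rewrite mxE (bigID (fun t' => s t' == s t)) /= => e.
rewrite -[RHS]e [X in _ = _ + X]big1 ?addr0.
  by apply: eq_bigr => t' /eqP et'; rewrite mxE et'.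
move=> t' hne; rewrite mxE.
have [->|nz] := eqVneq (rows (s t') t' 0 u) 0; first by rewrite mulr0.
have [_ htri' _] := hrows (s t').
case: (htri' t' u erefl nz) => [e1|hlt]; first by move: hne; rewrite -e1 hu eqxx.
rewrite hu in hlt; rewrite (IH t') ?mul0r //; last exact: hQ hQt hlt.
by have := span_height_lt hlt; lia.
Qed.

Lemma change_mx_unit : change_mx \in unitmx.
Proof.
rewrite -row_free_unit -kermx_eq0; apply/eqP/row_matrixP => i; rewrite row0.
have hK : row i (kermx change_mx) *m change_mx = 0 by apply/sub_kermxP; rewrite row_sub.
apply/rowP => j; rewrite [RHS]mxE.
by apply: (change_mx_upward_inj (Q := xpredT)) => // u _; rewrite hK mxE.
Qed.

End ChangeMx.

Lemma exists_change_mx : exists Phi : 'M[F]_k,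
  [/\ forall t, \sum_(u < k) Phi t u *: be u = al t,
      forall t u, Phi t u != 0 -> s0 u = s t \/ span_lt (s0 u) (s t),
      Phi \in unitmx &
      forall Q : pred (tspan n), (forall x z, Q x -> span_lt x z -> Q z) ->
      forall y : 'rV[F]_k, (forall u, Q (s0 u) -> (y *m Phi) 0 u = 0) ->
      forall t, Q (s t) -> y 0 t = 0].
Proof.
have /fin_all_exists [rows hrows] := class_rows.
exists (change_mx rows); split.
- move=> t; have [hl _ _] := hrows (s t).
  by rewrite -(hl t erefl) lincombE; apply: eq_bigr => u _; rewrite mxE.
- by move=> t u; rewrite mxE => hne; have [_ htri _] := hrows (s t); exact: htri.
- exact: change_mx_unit.
- exact: change_mx_upward_inj.
Qed.

End ChangeMatrix.

Section Converse.
Variables (F : finFieldType) (n : nat) (n_gt0 : (0 < n)%N).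
Notation fac_t := (seq (tspan n * 'rV[F]_n)).

Lemma card_nth_count (T : eqType) (x0 : T) (l : seq T) (P : pred T) k : size l = k ->
  #|[pred t : 'I_k | P (nth x0 l t)]| = count P l.
Proof.
move=> hk; rewrite -sum1_card -sum1_count (big_nth x0) hk big_mkord.
by apply: eq_bigl => t; rewrite inE.
Qed.

Lemma tensor_list_equiv_of_factor_span (fac fac0 : fac_t) :
  perm_eq (map fst fac0) (map fst fac) ->
  (forall s, s \in map fst fac -> factor_span fac0 (span_le^~ s) =
     (factor_span fac (pred1 s) + factor_span fac0 (span_lt^~ s))%VS) ->
  trellis_equiv (tensor_list fac) (tensor_list fac0).
Proof.
move=> hperm H'.
pose k := size fac0.
have hk : size fac = k by rewrite /k -(size_map fst fac) -(size_map fst fac0) (perm_size hperm).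
pose s (t : 'I_k) := (nth (factor0 F n) fac t).1.
pose al (t : 'I_k) := (nth (factor0 F n) fac t).2.
pose s0 (u : 'I_k) := (nth (factor0 F n) fac0 u).1.
pose be (u : 'I_k) := (nth (factor0 F n) fac0 u).2.
have hYa P : span_al s al P = factor_span fac P by rewrite (factor_span_ord P hk).
have HL1 t : al t \in (span_be s0 be (pred1 (s t)) + span_be s0 be (span_lt^~ (s t)))%VS.
  have hs : s t \in map fst fac by apply: map_f; apply: mem_nth; rewrite hk.
  rewrite -(factor_span_le_split n_gt0) H' // -hYa.
  by apply: (subvP (addvSl _ _)); apply: (memv_span_al al); exact: eqxx.
have HL2 sp :
    (span_be s0 be (pred1 sp) <= span_al s al (pred1 sp) + span_be s0 be (span_lt^~ sp))%VS.
  rewrite hYa; case: (boolP (sp \in map fst fac)) => hsp.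
    by rewrite -H' //; apply: factor_span_mono => x /eqP ->; exact: span_le_refl.
  suff -> : span_be s0 be (pred1 sp) = 0%VS by exact: sub0v.
  apply/eqP; rewrite -subv0; apply/subv_sumP => u /eqP hu; exfalso; apply: (negP hsp).
  by rewrite -(perm_mem hperm) -hu; apply: map_f; apply: mem_nth.
have Hcnt sp : #|[pred t | s t == sp]| = #|[pred u | s0 u == sp]|.
  rewrite (card_nth_count (factor0 F n) (fun p => p.1 == sp) hk).
  rewrite (card_nth_count (factor0 F n) (fun p => p.1 == sp) (erefl (size fac0))).
  by rewrite -!(count_map fst (pred1 sp)); move/seq.permP: hperm => ->.
have [Phi [hA hB hU hJ]] := exists_change_mx n_gt0 HL1 HL2 Hcnt.
apply: (@tensor_list_equiv_mx F n k fac fac0 hk erefl Phi) => //.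
- move=> i t u hne hu; case: (hB t u hne) => [e|hl]; first by move: hu; rewrite -/(s0 u) e.
  exact: (elem_in_le n_gt0 (span_ltW hl) hu).
- move=> i y hy t ht; apply: (hJ (elem_in^~ i)) => // x z hx hl.
  exact: (elem_in_le n_gt0 (span_ltW hl) hx).
Qed.

End Converse.

Local Close Scope ring_scope.
Unset Implicit Arguments.

Theorem mainTheorem10 (F : finFieldType) (n : nat) (n_gt0 : (0 < n)%N)
    (T : trellis F n) (fac : seq (tspan n * 'rV[F]_n)) :
  is_linear T -> is_trim T -> is_reduced T ->
  span_distribution T (map fst fac) ->
  (forall p, p \in fac -> vec_has_span p.2 p.1) ->
  (trellis_equiv T (tensor_list fac) <->
   (forall s, s \in map fst fac ->
      Cspan T s = (<<[seq p.2 | p <- fac & p.1 == s]>>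
                   + \sum_(s' : tspan n | span_lt s' s) Cspan T s')%VS)).
Proof.
move=> hlin _ _ [fac0 [[hsp0 [_ heq0]] hperm]] hspan.
have hspan0 p : p \in fac0 -> vec_has_span p.2 p.1 by case/hsp0.
have CT0 := Cspan_factorization n_gt0 _ hlin heq0 hspan0.
split=> [heq s _ | H].
- have CT := Cspan_factorization n_gt0 _ hlin heq hspan.
  by rewrite CT (eq_bigr _ (fun s' _ => CT s')) factor_span_le_decomp.
- apply: trellis_equiv_trans heq0 (trellis_equiv_sym _).
  apply: (tensor_list_equiv_of_factor_span n_gt0 hperm) => s hs.
  rewrite -CT0 H // span_filter_factor_span (eq_bigr _ (fun s' _ => CT0 s')).
  by rewrite (factor_span_lt_sum n_gt0).
Qed.
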